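(* Let $\mathcal{P}=\{1,\dots,M\}$, fix $i\in\mathcal{P}$, let $i'\notin\mathcal{P}$ be a new element (the replica of $i$), and put $\mathcal{P}^R=\mathcal{P}\cup\{i'\}$. Let $v(\cdot,\mathcal{P})\colon 2^{\mathcal{P}}\to\mathbb{R}$ and $v(\cdot,\mathcal{P}^R)\colon 2^{\mathcal{P}^R}\to\mathbb{R}$ be characteristic functions with $v(\mathcal{P},\mathcal{P})>0$ and $v(\mathcal{P}^R,\mathcal{P}^R)>0$, and let $a_i\in\mathbb{R}$. Assume: (1) $v(S,\mathcal{P})=v(S,\mathcal{P}^R)$ for all $S\subseteq\mathcal{P}$; (2) $v(S\cup\{i\},\mathcal{P}^R)-v(S,\mathcal{P}^R)\le a_i$ for every $S\subseteq\mathcal{P}^R\setminus\{i\}$ with $i'\in S$; (3) (supermodularity) $v(R\cup\{i\},\mathcal{P})-v(R,\mathcal{P})\le v(Q\cup\{i\},\mathcal{P})-v(Q,\mathcal{P})$ for all $R\subseteq Q\subseteq\mathcal{P}\setminus\{i\}$. Then $$\phi^R(i)\le \frac{\phi(i)\,v(\mathcal{P},\mathcal{P})+a_i}{2\,v(\mathcal{P}^R,\mathcal{P}^R)}.$$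
   Context: Normalized Shapley values: for the original market, $\phi(i)=\frac{1}{v(\mathcal{P},\mathcal{P})}\sum_{S\subseteq\mathcal{P}\setminus\{i\}}\frac{|S|!\,(M-|S|-1)!}{M!}\big(v(S\cup\{i\},\mathcal{P})-v(S,\mathcal{P})\big)$, and for the market with the replica (which has $M+1$ players), $\phi^R(i)=\frac{1}{v(\mathcal{P}^R,\mathcal{P}^R)}\sum_{S\subseteq\mathcal{P}^R\setminus\{i\}}\frac{|S|!\,(M-|S|)!}{(M+1)!}\big(v(S\cup\{i\},\mathcal{P}^R)-v(S,\mathcal{P}^R)\big)$. *)

From HB Require Import structures.
From mathcomp Require Import all_boot all_order all_algebra.
Set Implicit Arguments. Unset Strict Implicit. Unset Printing Implicit Defensive.
Import Order.TTheory GRing.Theory Num.Theory.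
Local Open Scope ring_scope.

Definition shapley (R : realFieldType) (T : finType) (v : {set T} -> R) (i : T) : R :=
  (v [set: T])^-1 *
  \sum_(S : {set T} | i \notin S)
     ((#|S|`! * (#|T| - #|S| - 1)`!)%:R / (#|T|`!)%:R) * (v (i |: S) - v S).

(* Both Shapley values are weighted sums of marginal contributions of i over the
   coalitions S of the other original players.  In the replica market the
   coalitions S + i' have total weight 1/2 (i' precedes i in half of all orders)
   and contribute at most a_i each, while the weight of S itself is half its
   weight in the original market plus a term proportional to
   |S|! (n - |S|)! (n - 2|S|).  Double counting the increments of the marginal
   contribution along S -> S + j shows that this skew-weighted sum is
   nonpositive as soon as the marginal contribution of i grows with the
   coalition, which is what supermodularity says. *)

From HB Require Import structures.
From mathcomp Require Import all_boot all_order all_algebra.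
From mathcomp Require Import ring lra zify.
Set Implicit Arguments. Unset Strict Implicit. Unset Printing Implicit Defensive.
Import Order.TTheory GRing.Theory Num.Theory.
Local Open Scope ring_scope.

Lemma subset_setC1 (T : finType) (i : T) (S : {set T}) :
  (S \subset [set~ i]) = (i \notin S).
Proof. by rewrite subsetC sub1set inE. Qed.

Lemma sum_subset_card (R : nmodType) (T : finType) (A : {set T}) (c : nat -> R) :
  \sum_(S : {set T} | S \subset A) c #|S| = \sum_(k < #|A|.+1) c k *+ 'C(#|A|, k).
Proof.
rewrite (partition_big (fun S : {set T} => inord #|S| : 'I_#|A|.+1) xpredT) //=.
apply: eq_bigr => k _.
rewrite (eq_bigl (mem [set S : {set T} | S \subset A & #|S| == k])) => [|S].
  rewrite (eq_bigr (fun=> c k)) => [|S]; first by rewrite sumr_const cards_draws.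
  by rewrite !inE => /andP[_ /eqP->].
rewrite !inE /=; have [sSA|//] := boolP (S \subset A).
by rewrite -val_eqE /= inordK // ltnS subset_leq_card.
Qed.

Lemma sum_subset_pairs (R : nmodType) (T : finType) (A : {set T})
    (F : {set T} -> T -> R) :
  \sum_(S : {set T} | S \subset A) \sum_(j in A :\: S) F S j =
  \sum_(U : {set T} | U \subset A) \sum_(j in U) F (U :\ j) j.
Proof.
rewrite (exchange_big_dep (mem A)) => [|S j _]; last by rewrite inE => /andP[].
rewrite [RHS](exchange_big_dep (mem A)) => [|U j /subsetP]; last exact.
apply: eq_bigr => j /[1!inE] jA.
rewrite [RHS](reindex_onto (fun S => j |: S) (fun U => U :\ j)) => [|U /andP[_ jU]];
  last exact: setD1K.
apply: eq_big => S; last by rewrite inE => /andP[_ /andP[/setU1K->]].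
rewrite subUset sub1set setU11 jA !inE jA !andbT.
have [jS|jS] := boolP (j \in S); last by rewrite setU1K ?eqxx ?andbT.
by rewrite /= andbF; apply/esym/andP => -[_ /eqP E]; move: jS; rewrite -E setD11.
Qed.

Lemma skew_weight_telescope (R : comPzRingType) (n u : nat) : (u <= n)%N ->
  ((u`! * (n - u)`!)%:R * (n%:R - 2 * u%:R) : R) =
  (n - u)%:R * (u.+1`! * (n - u)`!)%:R - u%:R * (u.-1.+1`! * (n - u.-1)`!)%:R.
Proof.
case: u => [|u] le_un; first by rewrite subn0 !fact0 factS fact0 /=; ring.
have -> : n = ((n - u.+1) + u.+1)%N by lia.
set m := (n - u.+1)%N.
have -> : (m + u.+1 - u.+1 = m)%N by lia.
have -> : (m + u.+1 - u = m.+1)%N by lia.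
rewrite !factS !natrM !natrD /=; ring.
Qed.

Lemma skew_weighted_sum_le0 (R : realDomainType) (T : finType) (A : {set T})
    (g : {set T} -> R) :
  (forall (S : {set T}) j, S \subset A -> j \in A :\: S -> g S <= g (j |: S)) ->
  \sum_(S : {set T} | S \subset A)
    (#|S|`! * (#|A| - #|S|)`!)%:R * (#|A|%:R - 2 * #|S|%:R) * g S <= 0.
Proof.
move=> g_incr; set n := #|A|.
pose beta u : R := (u.+1`! * (n - u)`!)%:R.
(* With these weights the sum of all increments g (j |: S) - g S, which is
   nonnegative, is exactly minus the skew-weighted sum. *)
have increments_ge0 : 0 <= \sum_(S : {set T} | S \subset A)
    (\sum_(j in A :\: S) beta #|S| * g (j |: S) -
     \sum_(j in A :\: S) beta #|S| * g S).
  apply: sumr_ge0 => S sSA; rewrite -sumrB; apply: sumr_ge0 => j jAS.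
  by rewrite -mulrBr mulr_ge0 ?ler0n // subr_ge0 g_incr.
have gained :
    \sum_(S : {set T} | S \subset A) \sum_(j in A :\: S) beta #|S| * g (j |: S) =
    \sum_(U : {set T} | U \subset A) #|U|%:R * beta #|U|.-1 * g U.
  rewrite sum_subset_pairs; apply: eq_bigr => U _.
  rewrite -mulrA mulr_natl -sumr_const; apply: eq_bigr => j jU.
  by rewrite setD1K // (cardsD1 j U) jU.
have lost :
    \sum_(S : {set T} | S \subset A) \sum_(j in A :\: S) beta #|S| * g S =
    \sum_(S : {set T} | S \subset A) (n - #|S|)%:R * beta #|S| * g S.
  apply: eq_bigr => S sSA.
  by rewrite sumr_const (cardsDS sSA) -mulrA mulr_natl.
rewrite (eq_bigr (fun S : {set T} =>
    ((n - #|S|)%:R * beta #|S| - #|S|%:R * beta #|S|.-1) * g S));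
  last by move=> S sSA; rewrite skew_weight_telescope ?subset_leq_card.
rewrite (eq_bigr (fun S : {set T} =>
    (n - #|S|)%:R * beta #|S| * g S - #|S|%:R * beta #|S|.-1 * g S));
  last by move=> S _; rewrite mulrBl.
by rewrite sumrB subr_le0 -lost -gained -subr_ge0 -sumrB.
Qed.

Definition shapley_weight {R : unitRingType} (n t : nat) : R :=
  (t`! * (n - t)`!)%:R / (n.+1`!)%:R.

Lemma sum_succ_ord (n : nat) : (\sum_(k < n.+1) k.+1 = 'C(n.+2, 2))%N.
Proof. by rewrite -bin2_sum big_mkord [RHS]big_ord_recl. Qed.

Lemma sum_subset_shapley_weightS (R : numFieldType) (T : finType) (A : {set T}) :
  \sum_(S : {set T} | S \subset A) shapley_weight #|A|.+1 #|S|.+1 = 2^-1 :> R.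
Proof.
set n := #|A|; rewrite /shapley_weight.
under eq_bigr do rewrite subSS.
rewrite -mulr_suml (sum_subset_card _ (fun k => (k.+1`! * (n - k)`!)%:R)).
rewrite (eq_bigr (fun k : 'I_n.+1 => (n`! * k.+1)%:R)) => [|k _]; last first.
  rewrite -mulrnA factS; congr _%:R.
  rewrite -(bin_fact (ltnSE (ltn_ord k))); ring.
rewrite -natr_sum -big_distrr /= sum_succ_ord.
have := bin_fact (leq_addl n 2); rewrite addnK addn2 => <-; rewrite !natrM.
have n_fact_neq0 : (n`!)%:R != 0 :> R by rewrite pnatr_eq0 -lt0n fact_gt0.
have bin_neq0 : ('C(n.+2, 2))%:R != 0 :> R by rewrite pnatr_eq0 -lt0n bin_gt0.
by field; rewrite n_fact_neq0 bin_neq0.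
Qed.

Lemma sum_set_option (R : nmodType) (T : finType) (i : T)
    (F : {set option T} -> R) :
  \sum_(S : {set option T} | Some i \notin S) F S =
  \sum_(S : {set T} | i \notin S) (F (Some @: S) + F (None |: Some @: S)).
Proof.
have Some_in (S : {set T}) x : (Some x \in Some @: S) = (x \in S).
  exact/mem_imset/Some_inj.
have None_notin (S : {set T}) : (None \in Some @: S) = false by apply/imsetP => -[].
pose unSome (S : {set option T}) := [set x | Some x \in S].
have unSomeK (S : {set T}) : unSome (Some @: S) = S.
  by apply/setP => x; rewrite inE Some_in.
have unSomeU1K (S : {set T}) : unSome (None |: Some @: S) = S.
  by apply/setP => x; rewrite !inE Some_in.
rewrite (bigID (fun S : {set option T} => None \in S)) /= addrC big_split /=.
congr (_ + _).
  rewrite (reindex_onto (fun S : {set T} => Some @: S) unSome) => [|S /andP[_ NS]].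
    by apply: eq_bigl => S; rewrite Some_in None_notin unSomeK eqxx !andbT.
  by apply/setP => -[x|]; rewrite ?Some_in ?inE ?None_notin ?(negbTE NS).
rewrite (reindex_onto (fun S : {set T} => None |: Some @: S) unSome) => [|S /andP[_ NS]].
  by apply: eq_bigl => S; rewrite !inE Some_in unSomeU1K /= eqxx !andbT.
by apply/setP => -[x|]; rewrite !inE ?Some_in /unSome ?inE ?eqxx.
Qed.

Lemma shapley_weight_succ_split (R : numFieldType) (n t : nat) : (t <= n)%N ->
  shapley_weight n.+1 t =
  shapley_weight n t / 2 +
  (t`! * (n - t)`!)%:R * (n%:R - 2 * t%:R) / (2 * (n.+2`!)%:R) :> R.
Proof.
move=> le_tn; rewrite /shapley_weight subSn // (factS (n - t)) (factS n.+1).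
rewrite -[(n - t).+1]addn1.
have : (n.+1`!)%:R != 0 :> R by rewrite pnatr_eq0 -lt0n fact_gt0.
move: n.+1`! t`! (n - t)`! => F A B F_neq0.
rewrite !natrM natrD natrB //.
by field; rewrite F_neq0 -!natrD !pnatr_eq0.
Qed.

Definition marginal (R : zmodType) (T : finType) (v : {set T} -> R) (i : T)
    (S : {set T}) : R :=
  v (i |: S) - v S.

Section ReplicaGame.

Variables (R : realFieldType) (T : finType) (i : T).
Variables (v : {set T} -> R) (vR : {set option T} -> R) (a : R).
Hypothesis v_vR : forall S : {set T}, v S = vR (Some @: S).
Hypothesis replica_marginal_le : forall S : {set option T},
  Some i \notin S -> None \in S -> marginal vR (Some i) S <= a.
Hypothesis v_supermodular : forall Rs Q : {set T}, Rs \subset Q -> i \notin Q ->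
  marginal v i Rs <= marginal v i Q.

Let n := #|[set~ i]|.

Let card_T : #|T| = n.+1.
Proof. by rewrite /n cardsC1 prednK //; apply/card_gt0P; exists i. Qed.

Lemma shapley_scaledE : v [set: T] != 0 ->
  v [set: T] * shapley v i = \sum_(S : {set T} | S \subset [set~ i])
    shapley_weight n #|S| * marginal v i S.
Proof.
move=> v_neq0; rewrite /shapley mulVKf // card_T.
under eq_bigl do rewrite -subset_setC1.
by apply: eq_bigr => S _; rewrite subnAC subn1.
Qed.

Lemma replica_shapley_scaledE : vR [set: option T] != 0 ->
  vR [set: option T] * shapley vR (Some i) =
  \sum_(S : {set T} | S \subset [set~ i])
    (shapley_weight n.+1 #|S| * marginal v i S +
     shapley_weight n.+1 #|S|.+1 * marginal vR (Some i) (None |: Some @: S)).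
Proof.
move=> vR_neq0; rewrite /shapley mulVKf // sum_set_option card_option card_T.
under eq_bigl do rewrite -subset_setC1.
apply: eq_bigr => S _; rewrite cardsU1 card_imset; last exact: Some_inj.
have -> : None \notin Some @: S by apply/imsetP => -[].
rewrite /marginal -imsetU1 -!v_vR /= add1n.
by rewrite subnAC subn1 [(n.+2 - _.+1)%N]subSS subnAC subn1.
Qed.

Lemma sum_marginal_le : v [set: T] != 0 ->
  \sum_(S : {set T} | S \subset [set~ i])
    shapley_weight n.+1 #|S| * marginal v i S
  <= v [set: T] * shapley v i / 2.
Proof.
move=> v_neq0; rewrite shapley_scaledE // mulr_suml.
rewrite (eq_bigr (fun S : {set T} =>
    shapley_weight n #|S| * marginal v i S / 2 + (2 * (n.+2`!)%:R)^-1 *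
    ((#|S|`! * (n - #|S|)`!)%:R * (n%:R - 2 * #|S|%:R) * marginal v i S))) => [|S sS].
  rewrite big_split -mulr_sumr /= gerDl mulr_ge0_le0 ?invr_ge0 ?mulr_ge0 ?ler0n //.
  apply: skew_weighted_sum_le0 => S j sS; rewrite !inE => /andP[jS ji].
  apply: v_supermodular; first exact: subsetUr.
  by rewrite !inE negb_or eq_sym ji -subset_setC1.
by rewrite (shapley_weight_succ_split R (subset_leq_card sS)); ring.
Qed.

Lemma sum_replica_marginal_le :
  \sum_(S : {set T} | S \subset [set~ i])
    shapley_weight n.+1 #|S|.+1 * marginal vR (Some i) (None |: Some @: S)
  <= a / 2.
Proof.
rewrite -(sum_subset_shapley_weightS R [set~ i]) mulr_sumr; apply: ler_sum => S sS.
rewrite [a * _]mulrC ler_wpM2l ?divr_ge0 ?ler0n // replica_marginal_le ?setU11 //.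
by rewrite !inE /= mem_imset -?subset_setC1 //; exact: Some_inj.
Qed.

End ReplicaGame.

Theorem mainTheorem1 (R : realFieldType) (M : nat) (i : 'I_M)
    (v : {set 'I_M} -> R) (vR : {set option 'I_M} -> R) (a : R)
    (hvpos : 0 < v [set: 'I_M]) (hvRpos : 0 < vR [set: option 'I_M])
    (h1 : forall S : {set 'I_M}, v S = vR [set Some j | j in S])
    (h2 : forall S : {set option 'I_M}, Some i \notin S -> None \in S ->
            vR (Some i |: S) - vR S <= a)
    (h3 : forall Rs Q : {set 'I_M}, Rs \subset Q -> i \notin Q ->
            v (i |: Rs) - v Rs <= v (i |: Q) - v Q) :
  shapley vR (Some i) <=
    (shapley v i * v [set: 'I_M] + a) / (2 * vR [set: option 'I_M]).
Proof.
have scaled_le : vR [set: option 'I_M] * shapley vR (Some i) <=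
    (v [set: 'I_M] * shapley v i + a) / 2.
  rewrite (replica_shapley_scaledE i h1 (lt0r_neq0 hvRpos)) big_split /=.
  have := sum_marginal_le h3 (lt0r_neq0 hvpos).
  have := sum_replica_marginal_le h2.
  lra.
rewrite ler_pdivlMr ?mulr_gt0 //; nra.
Qed.
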